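(* Let $y_0\in E$ and let $u$ be a positive solution of $0=\tfrac12b^2u''+\tilde au'+\eta u-u^2-d\frac{(u')^2}{u}$ on $[y_0,\infty)$ with $u(y)/\eta(y)\to1$ as $y\to\infty$ and $u\le\eta$ for all sufficiently large $y$. Assume that on $[y_0,\infty)$, $\eta\in C^2$, $\eta>0$, $\bar a:=\frac{\tilde a}{\eta}+(b^2-2d)\frac{\eta'}{\eta^2}\le0$, and that $\Psi\eta$ is increasing and concave on $[y_0,\infty)$. Then $u\le\eta\,\Psi\eta$ for all sufficiently large $y$.
   Context: $E=(E_-,\infty)$ with $E_-\in\{-\infty\}\cup\mathbb R$. $r,\lambda,\sigma,a,b,\rho,\delta:E\to\mathbb R$ are locally Lipschitz with $\sigma>0$, $b(y)\neq0$, $\rho(y)\in[-1,1]$; $R\in(0,\infty)\setminus\{1\}$. Define $\eta=\frac1R\big(\delta-(1-R)(r+\frac{\lambda^2}{2R})\big)$, $\tilde a=a+\frac{1-R}{R}\rho\lambda b$, $d=\frac12b^2((1-\rho^2)R+\rho^2+1)$, and for positive $g\in C^2$, $\Psi g=1+\frac{\frac12b^2g''+\tilde ag'}{g^2}-d\frac{(g')^2}{g^3}$. *)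

From Stdlib Require Import Reals.
From Coquelicot Require Import Coquelicot.
Open Scope R_scope.

(* The state space E = (E_-, oo) with E_- in {-oo} \cup R;
   None encodes E_- = -oo, Some e encodes E_- = e. *)
Definition inE (Em : option R) (y : R) : Prop :=
  match Em with None => True | Some e => e < y end.

Definition loc_lipschitz_on (Em : option R) (f : R -> R) : Prop :=
  forall y, inE Em y -> exists eps L, 0 < eps /\
    forall x z, inE Em x -> inE Em z -> Rabs (x - y) < eps -> Rabs (z - y) < eps ->
      Rabs (f x - f z) <= L * Rabs (x - z).

Definition eta_fn (RR : R) (r lam delta : R -> R) (y : R) : R :=
  / RR * (delta y - (1 - RR) * (r y + (lam y) ^ 2 / (2 * RR))).

Definition atilde (RR : R) (a rho lam b : R -> R) (y : R) : R :=
  a y + (1 - RR) / RR * rho y * lam y * b y.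

Definition dfn (RR : R) (b rho : R -> R) (y : R) : R :=
  / 2 * (b y) ^ 2 * ((1 - (rho y) ^ 2) * RR + (rho y) ^ 2 + 1).

Definition Psi (b atl d g : R -> R) (y : R) : R :=
  1 + (/ 2 * (b y) ^ 2 * Derive_n g 2 y + atl y * Derive g y) / (g y) ^ 2
    - d y * (Derive g y) ^ 2 / (g y) ^ 3.

(* C^2 on [y0, oo) (two-sided derivatives; y0 lies in the open set E) *)
Definition C2_from (g : R -> R) (y0 : R) : Prop :=
  forall y, y0 <= y ->
    ex_derive g y /\ ex_derive (Derive g) y /\ continuous (Derive_n g 2) y.

Definition nondecreasing_from (f : R -> R) (y0 : R) : Prop :=
  forall x y, y0 <= x -> x <= y -> f x <= f y.

Definition concave_from (f : R -> R) (y0 : R) : Prop :=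
  forall x y t, y0 <= x -> y0 <= y -> 0 <= t <= 1 ->
    t * f x + (1 - t) * f y <= f (t * x + (1 - t) * y).

Definition eventually_le (f g : R -> R) : Prop :=
  exists Y, forall y, Y <= y -> f y <= g y.

From Stdlib Require Import Reals Lra Classical.
From Coquelicot Require Import Coquelicot.
Open Scope R_scope.

(* Write f = u / eta.  Dividing the equation for u by eta^2 gives
     f (Psi eta - f) + (b^2 / (2 eta)) f'' + abar f' - (d / eta) (f')^2 / f = 0,
   so, since abar <= 0 and d >= 0, f'' > 0 wherever f > Psi eta and f' >= 0.
   If f > Psi eta held on a whole half-line, then f' >= 0 somewhere there
   (otherwise f would decrease strictly and could not tend to 1), hence f' would
   become positive and never decrease again, and f would exceed 1, contradicting
   u <= eta.  So f <= Psi eta at some point a.  If f > Psi eta at a later point,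
   f - Psi eta has a positive interior maximum at some w; there f'(w) >= 0 since
   Psi eta is nondecreasing, and f''(w) <= 0 since Psi eta is concave, which is
   impossible. *)

Lemma exists_small_pos (d m : R) : 0 < d -> 0 < m -> exists t, 0 < t < d /\ t <= m.
Proof.
  intros Hd Hm. exists (Rmin d m / 2).
  pose proof (Rmin_l d m). pose proof (Rmin_r d m). pose proof (Rmin_pos d m Hd Hm).
  lra.
Qed.

Lemma Rdiv_unit_interval (a b : R) : 0 <= a <= b -> 0 < b -> 0 <= a / b <= 1.
Proof.
  intros Ha Hb. split; [apply Rdiv_le_0_compat; lra |].
  apply (Rdiv_le_1 a b Hb). lra.
Qed.

Lemma derivable_pt_lim_pos_strict_incr (h : R -> R) (w l : R) :
  derivable_pt_lim h w l -> 0 < l ->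
  exists d, 0 < d /\ forall t, 0 < t < d -> h w < h (w + t) /\ h (w - t) < h w.
Proof.
  intros Hh Hl. destruct (Hh l Hl) as [d Hd]. exists d. split; [apply cond_pos|].
  intros t Ht. split.
  - assert (Hq := Hd t ltac:(lra) ltac:(rewrite Rabs_pos_eq; lra)).
    apply Rabs_def2 in Hq.
    assert (Hprod : 0 < (h (w + t) - h w) / t * t) by (apply Rmult_lt_0_compat; lra).
    field_simplify in Hprod; lra.
  - assert (Hq := Hd (- t) ltac:(lra) ltac:(rewrite Rabs_Ropp, Rabs_pos_eq; lra)).
    apply Rabs_def2 in Hq.
    assert (Hprod : 0 < (h (w + - t) - h w) / - t * t) by (apply Rmult_lt_0_compat; lra).
    replace ((h (w + - t) - h w) / - t * t) with (h w - h (w - t)) in Hprod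
      by (unfold Rminus; field; lra).
    lra.
Qed.

Lemma derivable_pt_lim_neg_strict_decr (h : R -> R) (w l : R) :
  derivable_pt_lim h w l -> l < 0 ->
  exists d, 0 < d /\ forall t, 0 < t < d -> h (w + t) < h w /\ h w < h (w - t).
Proof.
  intros Hh Hl. apply derivable_pt_lim_opp in Hh.
  destruct (derivable_pt_lim_pos_strict_incr _ _ _ Hh ltac:(lra)) as [d [Hd Ht]].
  exists d. split; [exact Hd|]. intros t Htd. specialize (Ht t Htd).
  unfold opp_fct in Ht. lra.
Qed.

(* With a nondecreasing concave psi, chords from the left endpoint y0 bound the
   slopes on both sides of w. *)
Lemma concave_nondecreasing_lipschitz (psi : R -> R) (y0 w : R) :
  nondecreasing_from psi y0 -> concave_from psi y0 -> y0 < w ->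
  forall x, y0 <= x ->
    Rabs (psi x - psi w) <= (psi w - psi y0) / (w - y0) * Rabs (x - w).
Proof.
  intros Hincr Hconc Hw x Hx.
  assert (HK : (psi w - psi y0) / (w - y0) * (w - y0) = psi w - psi y0)
    by (field; lra).
  destruct (Rle_or_lt x w) as [Hxw | Hxw].
  - set (t := (w - x) / (w - y0)).
    assert (Ht : 0 <= t <= 1) by (apply Rdiv_unit_interval; lra).
    assert (Hc := Hconc y0 w t (Rle_refl y0) ltac:(lra) Ht).
    replace (t * y0 + (1 - t) * w) with x in Hc by (unfold t; field; lra).
    assert (psi x <= psi w) by (apply Hincr; lra).
    rewrite Rabs_left1, Rabs_left1 by lra.
    replace (t * psi y0 + (1 - t) * psi w) with (psi w - t * (psi w - psi y0)) in Hc
      by ring.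
    rewrite <- HK in Hc. unfold t in Hc.
    replace ((w - x) / (w - y0) * ((psi w - psi y0) / (w - y0) * (w - y0)))
      with ((psi w - psi y0) / (w - y0) * (w - x)) in Hc by (field; lra).
    lra.
  - set (t := (x - w) / (x - y0)).
    assert (Ht : 0 <= t <= 1) by (apply Rdiv_unit_interval; lra).
    assert (Hc := Hconc y0 x t (Rle_refl y0) ltac:(lra) Ht).
    replace (t * y0 + (1 - t) * x) with w in Hc by (unfold t; field; lra).
    assert (psi w <= psi x) by (apply Hincr; lra).
    rewrite !Rabs_pos_eq by lra.
    assert (Hmul : (1 - t) * (psi x - psi y0) <= psi w - psi y0) by lra.
    replace (1 - t) with ((w - y0) / (x - y0)) in Hmul by (unfold t; field; lra).
    apply Rmult_le_compat_r with (r := (x - y0) / (w - y0)) in Hmul;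
      [| apply Rdiv_le_0_compat; lra].
    replace ((w - y0) / (x - y0) * (psi x - psi y0) * ((x - y0) / (w - y0)))
      with (psi x - psi y0) in Hmul by (field; lra).
    replace ((psi w - psi y0) * ((x - y0) / (w - y0)))
      with (psi w - psi y0 + (psi w - psi y0) / (w - y0) * (x - w)) in Hmul
      by (field; lra).
    lra.
Qed.

Lemma concave_nondecreasing_continuity_pt (psi : R -> R) (y0 w : R) :
  nondecreasing_from psi y0 -> concave_from psi y0 -> y0 < w -> continuity_pt psi w.
Proof.
  intros Hincr Hconc Hw e He.
  set (K := (psi w - psi y0) / (w - y0)).
  assert (HK : 0 <= K)
    by (apply Rdiv_le_0_compat; [assert (psi y0 <= psi w) by (apply Hincr; lra) |]; lra).
  exists (Rmin (w - y0) (e / (K + 1))). split.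
  { apply Rmin_pos; [lra | apply Rdiv_lt_0_compat; lra]. }
  intros x [_ Hx]. simpl in Hx |- *. unfold R_dist in *.
  pose proof (Rmin_l (w - y0) (e / (K + 1))). pose proof (Rmin_r (w - y0) (e / (K + 1))).
  assert (Hxy0 : y0 <= x) by (apply Rabs_def2 in Hx; lra).
  pose proof (concave_nondecreasing_lipschitz psi y0 w Hincr Hconc Hw x Hxy0) as Hlip.
  fold K in Hlip.
  assert (Hdist : Rabs (x - w) * (K + 1) < e).
  { apply Rmult_lt_compat_r with (r := K + 1) in Hx; [| lra].
    assert (e / (K + 1) * (K + 1) = e) by (field; lra). nra. }
  pose proof (Rabs_pos (x - w)). nra.
Qed.

Section RatioComparison.

Variables (y0 Y : R) (f f1 f2 psi : R -> R).

Hypothesis f_deriv : forall y, y0 < y -> derivable_pt_lim f y (f1 y).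
Hypothesis f1_deriv : forall y, y0 < y -> derivable_pt_lim f1 y (f2 y).
Hypothesis f_le_1 : forall y, Y <= y -> f y <= 1.
Hypothesis f_lim : is_lim f p_infty 1.
Hypothesis psi_incr : nondecreasing_from psi y0.
Hypothesis psi_conc : concave_from psi y0.
Hypothesis f_convex_above_psi : forall y, y0 < y -> psi y < f y -> 0 <= f1 y -> 0 < f2 y.

Lemma f_continuity_pt (y : R) : y0 < y -> continuity_pt f y.
Proof. intros Hy. apply derivable_continuous_pt. exists (f1 y). now apply f_deriv. Qed.

Lemma f1_continuity_pt (y : R) : y0 < y -> continuity_pt f1 y.
Proof. intros Hy. apply derivable_continuous_pt. exists (f2 y). now apply f1_deriv. Qed.

Lemma f_mean_value (x z : R) : y0 < x -> x < z ->
  exists c, f z - f x = f1 c * (z - x) /\ x < c < z.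
Proof. intros Hx Hxz. apply MVT_cor2; [exact Hxz |]. intros c Hc. apply f_deriv; lra. Qed.

Lemma exists_nonneg_slope (a : R) : y0 < a -> Y <= a -> exists c, a <= c /\ 0 <= f1 c.
Proof.
  intros Ha HaY. apply NNPP. intros Hnone.
  assert (Hdecr : forall x z, a <= x -> x < z -> f z < f x).
  { intros x z Hx Hxz. destruct (f_mean_value x z ltac:(lra) Hxz) as [c [Hc Hcxz]].
    assert (f1 c < 0).
    { apply Rnot_le_lt. intros Hc0. apply Hnone. exists c. split; [lra | exact Hc0]. }
    assert (f1 c * (z - x) < 0) by nra. lra. }
  assert (Hgap : f (a + 1) < 1) by (pose proof (Hdecr a (a + 1)); pose proof (f_le_1 a); lra).
  destruct (f_lim (fun v => f (a + 1) < v)) as [M HM].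
  { assert (Heps : 0 < 1 - f (a + 1)) by lra.
    exists (mkposreal _ Heps). intros v Hv.
    change (Rabs (v - 1) < 1 - f (a + 1)) in Hv. apply Rabs_def2 in Hv. lra. }
  pose proof (Rmax_l M (a + 1)). pose proof (Rmax_r M (a + 1)).
  pose proof (HM (Rmax M (a + 1) + 1) ltac:(lra)).
  pose proof (Hdecr (a + 1) (Rmax M (a + 1) + 1) ltac:(lra) ltac:(lra)).
  lra.
Qed.

Section AbovePsi.

Variable a : R.
Hypothesis a_gt_y0 : y0 < a.
Hypothesis f_above_psi : forall y, a <= y -> psi y < f y.

(* At a maximum point w of f1 on [c, y] one would have f1 w >= 0, hence f2 w > 0,
   so f1 would still increase to the right of w. *)
Lemma slope_nondecreasing_above (c y : R) :
  a <= c -> 0 <= f1 c -> c <= y -> f1 c <= f1 y.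
Proof.
  intros Hc Hc0 Hy. destruct (Rle_or_lt (f1 c) (f1 y)) as [| Hlt]; [assumption | exfalso].
  destruct (continuity_ab_maj f1 c y Hy) as [w [Hmax Hw]].
  { intros x Hx. apply f1_continuity_pt; lra. }
  assert (Hcw := Hmax c ltac:(lra)).
  assert (w <> y) by (intros ->; lra).
  assert (Hf2 := f_convex_above_psi w ltac:(lra) (f_above_psi w ltac:(lra)) ltac:(lra)).
  destruct (derivable_pt_lim_pos_strict_incr _ _ _ (f1_deriv w ltac:(lra)) Hf2)
    as [d [Hd Hincr]].
  destruct (exists_small_pos d (y - w) Hd ltac:(lra)) as [t [Ht Hty]].
  destruct (Hincr t Ht) as [Hup _]. pose proof (Hmax (w + t) ltac:(lra)). lra.
Qed.

Lemma above_psi_absurd : Y <= a -> False.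
Proof.
  intros HaY.
  destruct (exists_nonneg_slope a a_gt_y0 HaY) as [c [Hac Hc0]].
  assert (Hf2 := f_convex_above_psi c ltac:(lra) (f_above_psi c ltac:(lra)) Hc0).
  destruct (derivable_pt_lim_pos_strict_incr _ _ _ (f1_deriv c ltac:(lra)) Hf2)
    as [d [Hd Hincr]].
  destruct (Hincr (d / 2)) as [Hup _]; [lra |].
  set (c' := c + d / 2) in Hup.
  assert (Hc' : a <= c' /\ Y <= c') by (unfold c'; lra).
  (* f1 >= f1 c' > 0 after c', so f rises by 2 - f c' > 0 within length s *)
  set (s := (2 - f c') / f1 c').
  assert (Hs : 0 < s) by (pose proof (f_le_1 c'); apply Rdiv_lt_0_compat; lra).
  destruct (f_mean_value c' (c' + s) ltac:(unfold c'; lra) ltac:(lra)) as [xi [Hxi Hxis]].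
  assert (Hslope : f1 c' <= f1 xi) by (apply slope_nondecreasing_above; lra).
  assert (f1 c' * s = 2 - f c') by (unfold s; field; lra).
  assert (f1 c' * s <= f1 xi * s) by (apply Rmult_le_compat_r; lra).
  pose proof (f_le_1 (c' + s) ltac:(lra)).
  replace (c' + s - c') with s in Hxi by ring. lra.
Qed.

End AbovePsi.

Lemma exists_below_psi_after (a : R) :
  y0 < a -> Y <= a -> exists z, a <= z /\ f z <= psi z.
Proof.
  intros Ha HaY. apply NNPP. intros Hnone. apply (above_psi_absurd a Ha); [| exact HaY].
  intros y Hy. apply Rnot_le_lt. intros Hle. apply Hnone. now exists y.
Qed.

(* Monotonicity of psi yields f1 w >= 0 at the maximum, concavity of psi yields
   f2 w <= 0. *)
Lemma no_interior_max_above_psi (a w z : R) :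
  y0 < a -> a < w < z -> psi w < f w ->
  ~ (forall t, a <= t <= z -> f t - psi t <= f w - psi w).
Proof.
  intros Ha Hw Habove Hmax.
  assert (Hslope : 0 <= f1 w).
  { apply Rnot_lt_le. intros Hneg.
    destruct (derivable_pt_lim_neg_strict_decr _ _ _ (f_deriv w ltac:(lra)) Hneg)
      as [d [Hd Hdecr]].
    destruct (exists_small_pos d (w - a) Hd ltac:(lra)) as [t [Ht Hta]].
    destruct (Hdecr t Ht) as [_ Hleft].
    pose proof (Hmax (w - t) ltac:(lra)).
    pose proof (psi_incr (w - t) w ltac:(lra) ltac:(lra)). lra. }
  assert (Hcurv : f2 w <= 0).
  { apply Rnot_lt_le. intros Hpos.
    destruct (derivable_pt_lim_pos_strict_incr _ _ _ (f1_deriv w ltac:(lra)) Hpos)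
      as [d [Hd Hincr]].
    destruct (exists_small_pos d (Rmin (w - a) (z - w)) Hd
      ltac:(apply Rmin_pos; lra)) as [t [Ht Htm]].
    pose proof (Rmin_l (w - a) (z - w)). pose proof (Rmin_r (w - a) (z - w)).
    destruct (f_mean_value w (w + t) ltac:(lra) ltac:(lra)) as [x1 [Hx1 Hx1w]].
    destruct (f_mean_value (w - t) w ltac:(lra) ltac:(lra)) as [x2 [Hx2 Hx2w]].
    destruct (Hincr (x1 - w) ltac:(lra)) as [Hp _].
    destruct (Hincr (w - x2) ltac:(lra)) as [_ Hq].
    replace (w + (x1 - w)) with x1 in Hp by ring.
    replace (w - (w - x2)) with x2 in Hq by ring.
    assert (Hsecond : f w - f (w - t) < f (w + t) - f w).
    { replace (w + t - w) with t in Hx1 by ring.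
      replace (w - (w - t)) with t in Hx2 by ring. nra. }
    assert (Hc := psi_conc (w + t) (w - t) (/ 2) ltac:(lra) ltac:(lra) ltac:(lra)).
    replace (/ 2 * (w + t) + (1 - / 2) * (w - t)) with w in Hc by field.
    pose proof (Hmax (w + t) ltac:(lra)). pose proof (Hmax (w - t) ltac:(lra)).
    lra. }
  pose proof (f_convex_above_psi w ltac:(lra) Habove Hslope). lra.
Qed.

Theorem eventually_below_psi : exists a, forall y, a <= y -> f y <= psi y.
Proof.
  pose proof (Rmax_l Y (y0 + 1)) as HmaxY. pose proof (Rmax_r Y (y0 + 1)) as Hmaxy0.
  destruct (exists_below_psi_after (Rmax Y (y0 + 1)) ltac:(lra) HmaxY) as [a [Hba Ha]].
  exists a. intros y Hay. apply Rnot_lt_le. intros Habove.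
  assert (Hya : a < y) by (destruct Hay as [| <-]; lra).
  destruct (exists_below_psi_after y ltac:(lra) ltac:(lra)) as [z [Hyz Hz]].
  destruct (continuity_ab_maj (fun t => f t - psi t) a z ltac:(lra)) as [w [Hmax Hw]].
  { intros c Hc. apply continuity_pt_minus.
    - apply f_continuity_pt; lra.
    - apply (concave_nondecreasing_continuity_pt psi y0); auto; lra. }
  pose proof (Hmax y ltac:(lra)).
  assert (a <> w) by (intros <-; lra).
  assert (w <> z) by (intros ->; lra).
  apply (no_interior_max_above_psi a w z); [lra | lra | lra | exact Hmax].
Qed.

End RatioComparison.

Definition ratio_d1 (u e : R -> R) (y : R) : R :=
  (Derive u y * e y - u y * Derive e y) / e y ^ 2.

Definition ratio_d2 (u e : R -> R) (y : R) : R :=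
  ((Derive (Derive u) y * e y - u y * Derive (Derive e) y) * e y
   - 2 * Derive e y * (Derive u y * e y - u y * Derive e y)) / e y ^ 3.

Lemma ratio_derivatives (u e : R -> R) (y : R) :
  ex_derive u y -> ex_derive (Derive u) y -> ex_derive e y -> ex_derive (Derive e) y ->
  e y <> 0 ->
  derivable_pt_lim (fun t => u t / e t) y (ratio_d1 u e y) /\
  derivable_pt_lim (ratio_d1 u e) y (ratio_d2 u e y).
Proof.
  intros Hu Hu' He He' Hey. split; apply is_derive_Reals; unfold ratio_d1, ratio_d2.
  - apply is_derive_div; auto; apply Derive_correct; auto.
  - auto_derive; [repeat split; auto |].
    change (fun x => Derive u x) with (Derive u).
    change (fun x => Derive e x) with (Derive e).
    change (fun x => u x) with u. change (fun x => e x) with e.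
    field. exact Hey.
Qed.

Lemma ratio_d2_pos_above_Psi (b atl d u e : R -> R) (y : R) :
  0 < e y -> 0 < u y -> 0 < b y ^ 2 -> 0 <= d y ->
  atl y / e y + (b y ^ 2 - 2 * d y) * Derive e y / e y ^ 2 <= 0 ->
  0 = / 2 * b y ^ 2 * Derive_n u 2 y + atl y * Derive u y + e y * u y - u y ^ 2
      - d y * Derive u y ^ 2 / u y ->
  Psi b atl d e y < u y / e y -> 0 <= ratio_d1 u e y -> 0 < ratio_d2 u e y.
Proof.
  unfold Psi, ratio_d1, ratio_d2.
  change (Derive_n u 2 y) with (Derive (Derive u) y).
  change (Derive_n e 2 y) with (Derive (Derive e) y).
  set (U2 := Derive (Derive u) y). set (E2 := Derive (Derive e) y).
  set (U1 := Derive u y). set (E1 := Derive e y). set (U := u y). set (E := e y).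
  set (B := b y ^ 2). set (A := atl y). set (D := d y).
  intros HE HU HB HD Habar Hode Hpsi Hf1.
  set (f := U / E) in *.
  set (psi := 1 + (/ 2 * B * E2 + A * E1) / E ^ 2 - D * E1 ^ 2 / E ^ 3) in *.
  set (f1 := (U1 * E - U * E1) / E ^ 2) in *.
  set (f2 := ((U2 * E - U * E2) * E - 2 * E1 * (U1 * E - U * E1)) / E ^ 3).
  set (abar := A / E + (B - 2 * D) * E1 / E ^ 2) in *.
  assert (Hid : f * (psi - f) + / 2 * (B / E) * f2 + abar * f1 - D / E * f1 ^ 2 / f
              = (/ 2 * B * U2 + A * U1 + E * U - U ^ 2 - D * U1 ^ 2 / U) / E ^ 2)
    by (unfold f, psi, f1, f2, abar; field; lra).
  rewrite <- Hode, Rdiv_0_l in Hid.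
  apply Rnot_le_lt. intros Hf2.
  assert (0 < f) by (apply Rdiv_lt_0_compat; lra).
  assert (0 < B / E) by (apply Rdiv_lt_0_compat; lra).
  assert (0 <= D / E * f1 ^ 2 / f).
  { apply Rdiv_le_0_compat; [apply Rmult_le_pos; [apply Rdiv_le_0_compat |] |]; nra. }
  nra.
Qed.

Lemma dfn_nonneg (RR : R) (b rho : R -> R) (y : R) :
  0 < RR -> -1 <= rho y <= 1 -> 0 <= dfn RR b rho y.
Proof.
  intros HR Hrho. unfold dfn.
  assert (0 <= (1 - rho y ^ 2) * RR) by (apply Rmult_le_pos; nra).
  assert (0 <= b y ^ 2) by nra.
  apply Rmult_le_pos; nra.
Qed.

Lemma inE_from (Em : option R) (y0 y : R) : inE Em y0 -> y0 <= y -> inE Em y.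
Proof. destruct Em; simpl; intros; lra. Qed.
Theorem proposition4p14
  (Em : option R) (r lam sigma a b rho delta : R -> R) (RR : R)
  (Hr : loc_lipschitz_on Em r) (Hlam : loc_lipschitz_on Em lam)
  (Hsigma : loc_lipschitz_on Em sigma) (Ha : loc_lipschitz_on Em a)
  (Hb : loc_lipschitz_on Em b) (Hrho : loc_lipschitz_on Em rho)
  (Hdelta : loc_lipschitz_on Em delta)
  (Hsigma_pos : forall y, inE Em y -> 0 < sigma y)
  (Hb_ne0 : forall y, inE Em y -> b y <> 0)
  (Hrho_bd : forall y, inE Em y -> -1 <= rho y <= 1)
  (HRpos : 0 < RR) (HR1 : RR <> 1)
  (y0 : R) (Hy0 : inE Em y0)
  (u : R -> R)
  (Hu_pos : forall y, y0 <= y -> 0 < u y)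
  (Hu_diff : forall y, y0 <= y -> ex_derive u y /\ ex_derive (Derive u) y)
  (Hu_ode : forall y, y0 <= y ->
     0 = / 2 * (b y) ^ 2 * Derive_n u 2 y
         + atilde RR a rho lam b y * Derive u y
         + eta_fn RR r lam delta y * u y - (u y) ^ 2
         - dfn RR b rho y * (Derive u y) ^ 2 / u y)
  (Hu_lim : is_lim (fun y => u y / eta_fn RR r lam delta y) p_infty 1)
  (Hu_le : eventually_le u (eta_fn RR r lam delta))
  (Heta_C2 : C2_from (eta_fn RR r lam delta) y0)
  (Heta_pos : forall y, y0 <= y -> 0 < eta_fn RR r lam delta y)
  (Habar : forall y, y0 <= y ->
     atilde RR a rho lam b y / eta_fn RR r lam delta y
     + ((b y) ^ 2 - 2 * dfn RR b rho y) * Derive (eta_fn RR r lam delta) y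
         / (eta_fn RR r lam delta y) ^ 2 <= 0)
  (HPsi_incr : nondecreasing_from
     (Psi b (atilde RR a rho lam b) (dfn RR b rho) (eta_fn RR r lam delta)) y0)
  (HPsi_conc : concave_from
     (Psi b (atilde RR a rho lam b) (dfn RR b rho) (eta_fn RR r lam delta)) y0) :
  eventually_le u
    (fun y => eta_fn RR r lam delta y *
       Psi b (atilde RR a rho lam b) (dfn RR b rho) (eta_fn RR r lam delta) y).
Proof.
  set (eta := eta_fn RR r lam delta) in *.
  set (psi := Psi b (atilde RR a rho lam b) (dfn RR b rho) eta) in *.
  destruct Hu_le as [Y HY].
  assert (Hderivs : forall y, y0 < y ->
    derivable_pt_lim (fun t => u t / eta t) y (ratio_d1 u eta y) /\
    derivable_pt_lim (ratio_d1 u eta) y (ratio_d2 u eta y)).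
  { intros y Hy. destruct (Hu_diff y), (Heta_C2 y) as [? [? _]]; try lra.
    apply ratio_derivatives; auto. apply Rgt_not_eq, Heta_pos; lra. }
  destruct (eventually_below_psi y0 (Rmax Y y0) (fun y => u y / eta y)
              (ratio_d1 u eta) (ratio_d2 u eta) psi) as [a0 Ha0]; auto.
  - intros y Hy. apply Hderivs, Hy.
  - intros y Hy. apply Hderivs, Hy.
  - intros y Hy. pose proof (Rmax_l Y y0). pose proof (Rmax_r Y y0).
    apply (Rdiv_le_1 (u y) (eta y)); [apply Heta_pos | apply HY]; lra.
  - intros y Hy Hpsi Hslope. pose proof (inE_from Em y0 y Hy0 ltac:(lra)) as HyE.
    apply ratio_d2_pos_above_Psi with (b := b) (atl := atilde RR a rho lam b)
      (d := dfn RR b rho); auto.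
    + apply Heta_pos; lra.
    + apply Hu_pos; lra.
    + rewrite <- Rsqr_pow2. apply Rsqr_pos_lt, Hb_ne0, HyE.
    + apply dfn_nonneg; auto.
    + apply Habar; lra.
    + apply Hu_ode; lra.
  - exists (Rmax a0 y0). intros y Hy.
    pose proof (Rmax_l a0 y0). pose proof (Rmax_r a0 y0).
    pose proof (Ha0 y ltac:(lra)) as Hratio. pose proof (Heta_pos y ltac:(lra)).
    apply Rle_div_l in Hratio; [| lra]. rewrite Rmult_comm. exact Hratio.
Qed.
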